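(* Let $ABC$ be a triangle with incenter $I$ and Bevan point $B_e$. Let $A', B', C'$ be the feet of the perpendiculars from $B_e$ to $AI, BI, CI$ respectively. Then the orthocenter of triangle $A'B'C'$ coincides with the Nagel point of $ABC$.
   Context: The Bevan point $B_e$ of $ABC$ is the circumcenter of the excentral triangle $I_AI_BI_C$ (the triangle formed by the three excenters of $ABC$). The Nagel point of $ABC$ is the common point of the lines joining each vertex to the point where the corresponding excircle touches the opposite side. *)

From mathcomp Require Import all_boot all_order all_algebra.
Set Implicit Arguments. Unset Strict Implicit. Unset Printing Implicit Defensive.
Import Order.TTheory GRing.Theory Num.Theory.
Local Open Scope ring_scope.

Definition pt (R : rcfType) := (R * R)%type.

Section Geo.
Variable R : rcfType.

Definition padd (P Q : pt R) : pt R := (P.1 + Q.1, P.2 + Q.2).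
Definition psub (P Q : pt R) : pt R := (P.1 - Q.1, P.2 - Q.2).
Definition pscale (k : R) (P : pt R) : pt R := (k * P.1, k * P.2).
Definition dot (P Q : pt R) : R := P.1 * Q.1 + P.2 * Q.2.
Definition cross (P Q : pt R) : R := P.1 * Q.2 - P.2 * Q.1.
Definition dist (P Q : pt R) : R := Num.sqrt (dot (psub P Q) (psub P Q)).

Definition triangle_nondeg (A B C : pt R) : Prop := cross (psub B A) (psub C A) != 0.

(* X lies on the line through P and Q (P <> Q assumed where used) *)
Definition on_line (X P Q : pt R) : Prop := cross (psub Q P) (psub X P) = 0.

Definition bary (wA wB wC : R) (A B C : pt R) : pt R :=
  pscale (wA + wB + wC)^-1 (padd (pscale wA A) (padd (pscale wB B) (pscale wC C))).

Definition incenter (A B C : pt R) : pt R :=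
  bary (dist B C) (dist C A) (dist A B) A B C.
Definition excenterA (A B C : pt R) : pt R :=
  bary (- dist B C) (dist C A) (dist A B) A B C.
Definition excenterB (A B C : pt R) : pt R :=
  bary (dist B C) (- dist C A) (dist A B) A B C.
Definition excenterC (A B C : pt R) : pt R :=
  bary (dist B C) (dist C A) (- dist A B) A B C.

Definition is_circumcenter (O P Q S : pt R) : Prop :=
  dist O P = dist O Q /\ dist O Q = dist O S.

Definition is_bevan_point (Be A B C : pt R) : Prop :=
  is_circumcenter Be (excenterA A B C) (excenterB A B C) (excenterC A B C).

(* foot of the perpendicular from X to the line PQ (P <> Q) *)
Definition foot (X P Q : pt R) : pt R :=
  padd P (pscale (dot (psub X P) (psub Q P) / dot (psub Q P) (psub Q P)) (psub Q P)).

Definition extouchA (A B C : pt R) : pt R := foot (excenterA A B C) B C.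
Definition extouchB (A B C : pt R) : pt R := foot (excenterB A B C) C A.
Definition extouchC (A B C : pt R) : pt R := foot (excenterC A B C) A B.

Definition is_nagel_point (N A B C : pt R) : Prop :=
  [/\ on_line N A (extouchA A B C), on_line N B (extouchB A B C)
    & on_line N C (extouchC A B C)].

Definition is_orthocenter (H P Q S : pt R) : Prop :=
  [/\ dot (psub H P) (psub Q S) = 0, dot (psub H Q) (psub S P) = 0
    & dot (psub H S) (psub P Q) = 0].

End Geo.

(* Work in the affine frame (A; AB, AC): there every inner product is a
   quadratic form in the squared side lengths, and every point of the figure
   has coordinates rational in a = BC, b = CA, c = AB.  The incenter and
   excenters are barycentric, the Bevan point is 2O - I, and the Nagel point
   is (b+c-a : c+a-b : a+b-c); the strict triangle inequalities make all
   denominators positive.  The key identity is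
   (Be - V).(I - V) = abc/(a+b+c) = 2Rr for each vertex V, which places the
   foot of Be on VI at V + (I_V - I)/2; the orthocenter conditions are then
   rational identities in a, b, c. *)

From mathcomp Require Import all_boot all_order all_algebra.
From mathcomp Require Import ring lra.
Set Implicit Arguments. Unset Strict Implicit. Unset Printing Implicit Defensive.
Import Order.TTheory GRing.Theory Num.Theory.
Local Open Scope ring_scope.

Section PlaneVectors.
Variable R : rcfType.
Implicit Types (P Q S X Y u v : pt R).

Lemma sqr_dist P Q : dist P Q ^+ 2 = dot (psub P Q) (psub P Q).
Proof. by rewrite sqr_sqrtr // /dot; nra. Qed.

Lemma distC P Q : dist P Q = dist Q P.
Proof. by rewrite /dist /dot /psub /=; congr Num.sqrt; ring. Qed.

Lemma cross_cycle P Q S :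
  cross (psub Q P) (psub S P) = cross (psub S Q) (psub P Q).
Proof. by rewrite /cross /psub /=; ring. Qed.

Lemma lagrange_identity u v : dot u u * dot v v = dot u v ^+ 2 + cross u v ^+ 2.
Proof. by rewrite /dot /cross; ring. Qed.

Lemma dist_lt_add P Q S :
  cross (psub Q P) (psub S P) != 0 -> dist Q S < dist Q P + dist P S.
Proof.
set u := psub Q P; set v := psub S P => uv_nz.
have QP_ge0 : 0 <= dist Q P by rewrite sqrtr_ge0.
have PS_ge0 : 0 <= dist P S by rewrite sqrtr_ge0.
have QPu : dist Q P ^+ 2 = dot u u by rewrite sqr_dist.
have PSv : dist P S ^+ 2 = dot v v by rewrite sqr_dist /u /v /dot /psub /=; ring.
have QSuv : dist Q S ^+ 2 = dot u u + dot v v - 2 * dot u v.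
  by rewrite sqr_dist /u /v /dot /psub /=; ring.
have cross2_gt0 : 0 < cross u v ^+ 2 by rewrite exprn_even_gt0.
have prod_ge0 : 0 <= dist Q P * dist P S by rewrite mulr_ge0.
have dot_gt : - dot u v < dist Q P * dist P S.
  by have := lagrange_identity u v; rewrite -QPu -PSv; nra.
rewrite -ltr_sqr ?nnegrE ?addr_ge0 ?sqrtr_ge0 // QSuv -QPu -PSv.
by clear -dot_gt; nra.
Qed.

Lemma equidistant_perp X Y P Q :
  dist X P = dist X Q -> dist Y P = dist Y Q -> dot (psub X Y) (psub P Q) = 0.
Proof.
move=> /(congr1 (fun r => r ^+ 2)) /= XPQ /(congr1 (fun r => r ^+ 2)) /= YPQ.
rewrite !sqr_dist in XPQ YPQ.
have -> : dot (psub X Y) (psub P Q) =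
  ((dot (psub X Q) (psub X Q) - dot (psub X P) (psub X P)) -
   (dot (psub Y Q) (psub Y Q) - dot (psub Y P) (psub Y P))) / 2.
  by rewrite /dot /psub /=; field.
by rewrite XPQ YPQ !subrr mul0r.
Qed.

Lemma eq_of_dot_eq0 X Y u v :
  cross u v != 0 -> dot (psub X Y) u = 0 -> dot (psub X Y) v = 0 -> X = Y.
Proof.
case: X Y u v => [x1 x2] [y1 y2] [u1 u2] [v1 v2].
rewrite /dot /cross /psub /= => uv_nz du dv.
have cancel d : d * (u1 * v2 - u2 * v1) = 0 -> d = 0.
  by move/eqP; rewrite mulf_eq0 (negbTE uv_nz) orbF => /eqP.
congr pair; apply/eqP; rewrite -subr_eq0; apply/eqP/cancel.
- transitivity (v2 * ((x1 - y1) * u1 + (x2 - y2) * u2)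
                - u2 * ((x1 - y1) * v1 + (x2 - y2) * v2)); first by ring.
  by rewrite du dv; ring.
- transitivity (u1 * ((x1 - y1) * v1 + (x2 - y2) * v2)
                - v1 * ((x1 - y1) * u1 + (x2 - y2) * u2)); first by ring.
  by rewrite du dv; ring.
Qed.

Lemma eq_of_cross_eq0 X Y u v :
  cross u v != 0 -> cross u (psub X Y) = 0 -> cross v (psub X Y) = 0 -> X = Y.
Proof.
case: X Y u v => [x1 x2] [y1 y2] [u1 u2] [v1 v2].
rewrite /cross /psub /= => uv_nz cu cv.
have cancel d : d * (u1 * v2 - u2 * v1) = 0 -> d = 0.
  by move/eqP; rewrite mulf_eq0 (negbTE uv_nz) orbF => /eqP.
congr pair; apply/eqP; rewrite -subr_eq0; apply/eqP/cancel.
- transitivity (v1 * (u1 * (x2 - y2) - u2 * (x1 - y1))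
                - u1 * (v1 * (x2 - y2) - v2 * (x1 - y1))); first by ring.
  by rewrite cu cv; ring.
- transitivity (v2 * (u1 * (x2 - y2) - u2 * (x1 - y1))
                - u2 * (v1 * (x2 - y2) - v2 * (x1 - y1))); first by ring.
  by rewrite cu cv; ring.
Qed.

Lemma circumcenter_unique X Y P Q S :
  cross (psub P Q) (psub Q S) != 0 ->
  is_circumcenter X P Q S -> is_circumcenter Y P Q S -> X = Y.
Proof.
move=> PQS [XPQ XQS] [YPQ YQS].
exact: eq_of_dot_eq0 PQS (equidistant_perp XPQ YPQ) (equidistant_perp XQS YQS).
Qed.

Lemma on_line_sub X Y P Q :
  on_line X P Q -> on_line Y P Q -> cross (psub Q P) (psub X Y) = 0.
Proof.
rewrite /on_line => XPQ YPQ.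
have -> : cross (psub Q P) (psub X Y) =
  cross (psub Q P) (psub X P) - cross (psub Q P) (psub Y P).
  by rewrite /cross /psub /=; ring.
by rewrite XPQ YPQ subrr.
Qed.

Lemma lines_meet_unique X Y P Q P' Q' :
  cross (psub Q P) (psub Q' P') != 0 ->
  on_line X P Q -> on_line Y P Q -> on_line X P' Q' -> on_line Y P' Q' -> X = Y.
Proof.
move=> nonparallel XPQ YPQ XPQ' YPQ'.
exact: eq_of_cross_eq0 nonparallel (on_line_sub XPQ YPQ) (on_line_sub XPQ' YPQ').
Qed.

End PlaneVectors.

Section AffineFrame.
Variables (R : rcfType) (A B C : pt R).

Definition affine_pt (y z : R) : pt R :=
  padd A (padd (pscale y (psub B A)) (pscale z (psub C A))).

Local Notation a := (dist B C).
Local Notation b := (dist C A).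
Local Notation c := (dist A B).

Definition gram (dy dz ey ez : R) : R :=
  dy * ey * c ^+ 2 + (dy * ez + dz * ey) * (b ^+ 2 + c ^+ 2 - a ^+ 2) / 2
  + dz * ez * b ^+ 2.

Ltac unfold_affine := rewrite /affine_pt /padd /pscale /psub /=.

Lemma affine_ptA : A = affine_pt 0 0.
Proof. by unfold_affine; case: A => ? ? /=; congr pair; ring. Qed.

Lemma affine_ptB : B = affine_pt 1 0.
Proof. by unfold_affine; case: A B => ? ? [? ?] /=; congr pair; ring. Qed.

Lemma affine_ptC : C = affine_pt 0 1.
Proof. by unfold_affine; case: A C => ? ? [? ?] /=; congr pair; ring. Qed.

Lemma dot_affine P Q S T y1 z1 y2 z2 y3 z3 y4 z4 :
  P = affine_pt y1 z1 -> Q = affine_pt y2 z2 ->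
  S = affine_pt y3 z3 -> T = affine_pt y4 z4 ->
  dot (psub P Q) (psub S T) = gram (y1 - y2) (z1 - z2) (y3 - y4) (z3 - z4).
Proof.
by move=> -> -> -> ->; rewrite /gram !sqr_dist /dot; unfold_affine; field.
Qed.

Lemma cross_affine P Q S T y1 z1 y2 z2 y3 z3 y4 z4 :
  P = affine_pt y1 z1 -> Q = affine_pt y2 z2 ->
  S = affine_pt y3 z3 -> T = affine_pt y4 z4 ->
  cross (psub P Q) (psub S T) =
  ((y1 - y2) * (z3 - z4) - (z1 - z2) * (y3 - y4)) * cross (psub B A) (psub C A).
Proof. by move=> -> -> -> ->; rewrite /cross; unfold_affine; ring. Qed.

Lemma bary_affine x y z : x + y + z != 0 ->
  bary x y z A B C = affine_pt (y / (x + y + z)) (z / (x + y + z)).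
Proof.
by move=> xyz_nz; rewrite /bary; unfold_affine; congr pair; field.
Qed.

Lemma foot_affine X P Q y1 z1 y2 z2 :
  P = affine_pt y1 z1 -> Q = affine_pt y2 z2 ->
  let t := dot (psub X P) (psub Q P) / dot (psub Q P) (psub Q P) in
  foot X P Q = affine_pt (y1 + t * (y2 - y1)) (z1 + t * (z2 - z1)).
Proof.
move=> P1 Q2 t; rewrite /foot -/t; clearbody t; rewrite P1 Q2.
by unfold_affine; congr pair; ring.
Qed.

End AffineFrame.

Section Triangle.
Variables (R : rcfType) (A B C : pt R).
Hypothesis ABC : triangle_nondeg A B C.

Local Notation a := (dist B C).
Local Notation b := (dist C A).
Local Notation c := (dist A B).
Local Notation s := (a + b + c).
Local Notation affine := (affine_pt A B C).
Local Notation I := (incenter A B C).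
Local Notation A_affine := (affine_ptA A B C).
Local Notation B_affine := (affine_ptB A B C).
Local Notation C_affine := (affine_ptC A B C).

Lemma triangle_ineqs : [/\ a < b + c, b < c + a & c < a + b].
Proof.
have nondegB : cross (psub C B) (psub A B) != 0 by rewrite -cross_cycle.
have nondegC : cross (psub A C) (psub B C) != 0 by rewrite -cross_cycle.
have := dist_lt_add ABC; have := dist_lt_add nondegB; have := dist_lt_add nondegC.
rewrite (distC A C) (distC C B) (distC B A).
by split; lra.
Qed.

Local Notation area16 := (a ^+ 2 * (b ^+ 2 + c ^+ 2 - a ^+ 2)
  + b ^+ 2 * (c ^+ 2 + a ^+ 2 - b ^+ 2) + c ^+ 2 * (a ^+ 2 + b ^+ 2 - c ^+ 2)).

Lemma area16_gt0 : 0 < area16.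
Proof.
have -> : area16 = 4 * cross (psub B A) (psub C A) ^+ 2.
  by rewrite !sqr_dist /dot /cross /psub /=; ring.
by rewrite mulr_gt0 // exprn_even_gt0.
Qed.

Ltac positivity := have [? ? ?] := triangle_ineqs; have := area16_gt0; first [lra | nra].
Ltac field_tri := field; rewrite ?gt_eqF //; positivity.

Lemma incenter_affine : I = affine (b / s) (c / s).
Proof. by rewrite /incenter bary_affine // gt_eqF //; positivity. Qed.

Lemma excenterA_affine :
  excenterA A B C = affine (b / (b + c - a)) (c / (b + c - a)).
Proof.
rewrite /excenterA bary_affine; first by congr affine_pt; field_tri.
by rewrite gt_eqF //; positivity.
Qed.

Lemma excenterB_affine :
  excenterB A B C = affine (- b / (c + a - b)) (c / (c + a - b)).
Proof.
rewrite /excenterB bary_affine; first by congr affine_pt; field_tri.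
by rewrite gt_eqF //; positivity.
Qed.

Lemma excenterC_affine :
  excenterC A B C = affine (b / (a + b - c)) (- c / (a + b - c)).
Proof.
rewrite /excenterC bary_affine; first by congr affine_pt; field_tri.
by rewrite gt_eqF //; positivity.
Qed.

(* 2O - I, with the circumcenter O = (a^2(b^2+c^2-a^2) : ... : ...). *)
Lemma bevan_point_affine Be : is_bevan_point Be A B C ->
  Be = affine (2 * b ^+ 2 * (c ^+ 2 + a ^+ 2 - b ^+ 2) / area16 - b / s)
              (2 * c ^+ 2 * (a ^+ 2 + b ^+ 2 - c ^+ 2) / area16 - c / s).
Proof.
move=> BeABC; apply: (circumcenter_unique _ BeABC).
- rewrite (cross_affine excenterA_affine excenterB_affine excenterB_affine
                        excenterC_affine) mulf_neq0 //.
  have -> : (b / (b + c - a) - - b / (c + a - b)) * (c / (c + a - b) - - c / (a + b - c))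
            - (c / (b + c - a) - c / (c + a - b)) * (- b / (c + a - b) - b / (a + b - c))
          = 4 * a * b * c / ((b + c - a) * (c + a - b) * (a + b - c)) by field_tri.
  by rewrite gt_eqF // divr_gt0 ?mulr_gt0 //; positivity.
- by split; apply: (congr1 Num.sqrt);
    rewrite ?(dot_affine erefl excenterA_affine erefl excenterA_affine)
            ?(dot_affine erefl excenterB_affine erefl excenterB_affine)
            ?(dot_affine erefl excenterC_affine erefl excenterC_affine) /gram;
    field_tri.
Qed.

Lemma dot_bevan_incenter Be : is_bevan_point Be A B C ->
  [/\ dot (psub Be A) (psub I A) = a * b * c / s,
      dot (psub Be B) (psub I B) = a * b * c / s
    & dot (psub Be C) (psub I C) = a * b * c / s].
Proof.
move/bevan_point_affine->.
by split; rewrite ?(dot_affine erefl A_affine incenter_affine A_affine)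
  ?(dot_affine erefl B_affine incenter_affine B_affine)
  ?(dot_affine erefl C_affine incenter_affine C_affine) /gram; field_tri.
Qed.

Lemma dot_incenter_vertex :
  [/\ dot (psub I A) (psub I A) = b * c * (b + c - a) / s,
      dot (psub I B) (psub I B) = c * a * (c + a - b) / s
    & dot (psub I C) (psub I C) = a * b * (a + b - c) / s].
Proof.
by split; rewrite ?(dot_affine incenter_affine A_affine incenter_affine A_affine)
  ?(dot_affine incenter_affine B_affine incenter_affine B_affine)
  ?(dot_affine incenter_affine C_affine incenter_affine C_affine) /gram; field_tri.
Qed.

(* A' = A + (I_A - I)/2, and similarly for B' and C'. *)
Local Notation yA' := (a * b / ((b + c - a) * s)).
Local Notation zA' := (a * c / ((b + c - a) * s)).
Local Notation yB' := (1 - b * (c + a) / ((c + a - b) * s)).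
Local Notation zB' := (b * c / ((c + a - b) * s)).
Local Notation yC' := (b * c / ((a + b - c) * s)).
Local Notation zC' := (1 - c * (a + b) / ((a + b - c) * s)).

Lemma foot_bevan_incenter Be : is_bevan_point Be A B C ->
  [/\ foot Be A I = affine yA' zA', foot Be B I = affine yB' zB'
    & foot Be C I = affine yC' zC'].
Proof.
case/dot_bevan_incenter => BeA BeB BeC; have [IA IB IC] := dot_incenter_vertex.
split.
- by rewrite (foot_affine _ A_affine incenter_affine) BeA IA; congr affine_pt; field_tri.
- by rewrite (foot_affine _ B_affine incenter_affine) BeB IB; congr affine_pt; field_tri.
- by rewrite (foot_affine _ C_affine incenter_affine) BeC IC; congr affine_pt; field_tri.
Qed.

Lemma extouchA_affine :
  extouchA A B C = affine ((c + a - b) / (2 * a)) ((a + b - c) / (2 * a)).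
Proof.
rewrite /extouchA (foot_affine _ B_affine C_affine).
rewrite (dot_affine excenterA_affine B_affine C_affine B_affine).
rewrite (dot_affine C_affine B_affine C_affine B_affine) /gram.
by congr affine_pt; field_tri.
Qed.

Lemma extouchB_affine : extouchB A B C = affine 0 ((a + b - c) / (2 * b)).
Proof.
rewrite /extouchB (foot_affine _ C_affine A_affine).
rewrite (dot_affine excenterB_affine C_affine A_affine C_affine).
rewrite (dot_affine A_affine C_affine A_affine C_affine) /gram.
by congr affine_pt; field_tri.
Qed.

Lemma nagel_point_affine N : is_nagel_point N A B C ->
  N = affine ((c + a - b) / s) ((a + b - c) / s).
Proof.
case=> NA NB _; apply: (lines_meet_unique _ NA _ NB).
- rewrite (cross_affine extouchA_affine A_affine extouchB_affine B_affine)
          mulf_neq0 //.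
  have -> : ((c + a - b) / (2 * a) - 0) * ((a + b - c) / (2 * b) - 0)
            - ((a + b - c) / (2 * a) - 0) * (0 - 1)
          = (a + b - c) * s / (4 * a * b) by field_tri.
  by rewrite gt_eqF // divr_gt0 ?mulr_gt0 //; positivity.
- rewrite /on_line (cross_affine extouchA_affine A_affine erefl A_affine).
  by rewrite -[RHS](mul0r (cross (psub B A) (psub C A))); congr (_ * _); field_tri.
- rewrite /on_line (cross_affine extouchB_affine B_affine erefl B_affine).
  by rewrite -[RHS](mul0r (cross (psub B A) (psub C A))); congr (_ * _); field_tri.
Qed.

Lemma orthocenter_feet :
  is_orthocenter (affine ((c + a - b) / s) ((a + b - c) / s))
    (affine yA' zA') (affine yB' zB') (affine yC' zC').
Proof. by split; rewrite (dot_affine erefl erefl erefl erefl) /gram; field_tri. Qed.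

End Triangle.

Theorem proposition4p1 (R : rcfType) (A B C Be N : pt R) :
  triangle_nondeg A B C ->
  is_bevan_point Be A B C ->
  is_nagel_point N A B C ->
  let I := incenter A B C in
  is_orthocenter N (foot Be A I) (foot Be B I) (foot Be C I).
Proof.
move=> ABC BeABC NABC I.
have [-> -> ->] := foot_bevan_incenter ABC BeABC.
rewrite (nagel_point_affine ABC NABC).
exact: orthocenter_feet.
Qed.
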